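(* Let $T_i,T_j$ be indecomposable summands of a maximal rigid object $T$ of $\mathcal{C}_n$. Then either $T_i\in\mathcal{W}_{T_j}$, or $T_j\in\mathcal{W}_{T_i}$, or $\mathcal{W}_{T_i}\cap\mathcal{W}_{T_j}=\emptyset$.
   Context: Let $k$ be algebraically closed, $n\ge2$, $\mathcal{T}_n$ the tube of rank $n$ (finite-dimensional nilpotent representations of the cyclically oriented $\tilde A_{n-1}$-quiver; AR-translation $\tau$), $\mathcal{C}_n=D^b(\mathcal{T}_n)/\tau^{-1}[1]$ the cluster tube, with indecomposables identified with those of $\mathcal{T}_n$. Indecomposables have coordinates $(a,b)$, $a\in\mathbb{Z}/n$, $b\ge1$ the quasilength, with $\tau(a,b)=(a-1,b)$ and irreducible maps $(a,b)\to(a,b+1)$ and $(a,b)\to(a+1,b-1)$. For $X=(a,i)$, $i\le n-1$, the wing $\mathcal{W}_X$ is $\{(a+s,i'):s\ge0,i'\ge1,s+i'\le i\}$. $T$ is maximal rigid if $\operatorname{Ext}^1_{\mathcal{C}_n}(T,T)=0$ and $\operatorname{Ext}^1(T\oplus X,T\oplus X)=0$ implies $X\in\operatorname{add}T$; all indecomposable summands of a maximal rigid object have quasilength at most $n-1$. *)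

From HB Require Import structures.
From mathcomp Require Import all_boot all_order all_algebra.
Set Implicit Arguments. Unset Strict Implicit. Unset Printing Implicit Defensive.
Import GRing.Theory.
Local Open Scope ring_scope.

(* Indecomposable objects of the tube T_n (equivalently of the cluster tube
   C_n) are encoded by their coordinates (a, b) : 'I_n * nat with b >= 1.
   Concretely (a,b) is the uniserial nilpotent representation of the cyclic
   quiver with vertices Z/n and arrows v -> v-1 having basis e_0,...,e_{b-1},
   e_j sitting at vertex (a + j) mod n, the arrows acting by e_j |-> e_{j-1}
   (e_0 |-> 0).  Thus (a,1) is its quasi-socle, tau (a,b) = (a-1,b),
   (a,b) -> (a,b+1) is the irreducible mono and (a,b) -> (a+1,b-1) the
   irreducible epi. *)
Definition ind (n : nat) := ('I_n * nat)%type.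

Definition valid_ind {n} (X : ind n) : bool := (0 < X.2)%N.

Definition degI (n a j : nat) : nat := ((a + j) %% n)%N.

(* the arrow action e_j |-> e_{j-1}, as a matrix acting on column vectors *)
Definition shiftmx (k : fieldType) (b : nat) : 'M[k]_b :=
  \matrix_(i < b, j < b) (if (j == i.+1 :> nat) then 1 else 0).

(* Ext^1_{T_n}(X,Y) = 0, via the standard presentation of Ext^1 for quiver
   representations:  Ext^1(M,N) = coker( (+)_v Hom(M_v,N_v) -> (+)_{alpha : v -> v-1} Hom(M_v,N_{v-1}) ),
   (f_v) |-> (N_alpha f_v - f_{v-1} M_alpha).  Linear maps M -> N are b' x b
   matrices; the degree conditions say which blocks are allowed.  Vanishing
   means the map is surjective. *)
Definition ext1T_zero (k : fieldType) {n} (X Y : ind n) : Prop :=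
  let: (a, b) := X in let: (a', b') := Y in
  forall G : 'M[k]_(b', b),
    (forall (i : 'I_b') (j : 'I_b),
        ((degI n a' i).+1 %% n)%N != degI n a j -> G i j = 0) ->
    exists F : 'M[k]_(b', b),
      (forall (i : 'I_b') (j : 'I_b), degI n a' i != degI n a j -> F i j = 0)
      /\ G = shiftmx k b' *m F - F *m shiftmx k b.

(* In the cluster tube C_n = D^b(T_n)/tau^{-1}[1]:
   Ext^1_{C_n}(X,Y) = Ext^1_{T_n}(X,Y) (+) D Ext^1_{T_n}(Y,X). *)
Definition ext1C_zero (k : fieldType) {n} (X Y : ind n) : Prop :=
  ext1T_zero k X Y /\ ext1T_zero k Y X.

(* A (basic) object T is represented by the list of its indecomposable
   summands; Ext^1 is additive. *)
Definition rigid (k : fieldType) {n} (T : seq (ind n)) : Prop :=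
  forall X Y, X \in T -> Y \in T -> ext1C_zero k X Y.

Definition maximal_rigid (k : fieldType) {n} (T : seq (ind n)) : Prop :=
  [/\ forall X, X \in T -> valid_ind X,
      rigid k T &
      forall Z : ind n, valid_ind Z -> rigid k (Z :: T) -> Z \in T].

Definition in_wing {n} (X Y : ind n) : Prop :=
  let: (a, i) := X in let: (c, i') := Y in
  exists s : nat, [/\ (0 < i')%N, (s + i' <= i)%N & (c : nat) = ((a + s) %% n)%N].

From mathcomp Require Import all_boot all_order all_algebra.
From mathcomp Require Import zify.
From Stdlib Require Import Classical.

(* A rigid indecomposable (a, b) has quasilength b < n, since otherwise
   Ext^1(X, X) <> 0; so every wing is an arc of the circle Z/n of length < n.
   If the wings of X = (a, b) and Y = (c, e) meet, the quasi-socle of one of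
   them, say c, lifts into the arc [a, a + b) of the other.  Then either Y's
   arc ends inside X's (Y lies in W_X), or c = a and X lies in W_Y, or Y starts
   at a + d + 1 inside X's arc and leaves it.  In the last case
   Ext^1_{T_n}(Y, X) <> 0: the elementary cocycle G = E_{d,0} pairs to 1 under
   G |-> tr (G P) with the matrix P that truncates and shifts by d, while this
   pairing kills all coboundaries because P intertwines the two arrow actions. *)

Set Implicit Arguments.
Unset Strict Implicit.
Unset Printing Implicit Defensive.

Import GRing.Theory.
Local Open Scope ring_scope.

Lemma sum_ord_indicator_mul (R : pzSemiRingType) (m c : nat) (g : nat -> R) :
  \sum_(i < m) (if i == c :> nat then 1 else 0) * g i =
  if (c < m)%N then g c else 0.
Proof.
transitivity (\sum_(i < m | i == c :> nat) g i); last exact: big_ord1_eq.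
rewrite [RHS]big_mkcond; apply: eq_bigr => i _ /=.
by case: eqP; rewrite ?mul1r ?mul0r.
Qed.

Lemma mxtrace_delta_mul (R : pzSemiRingType) (m p : nat) (i : 'I_p) (j : 'I_m)
    (A : 'M[R]_(m, p)) :
  \tr (delta_mx i j *m A) = A j i.
Proof.
rewrite /mxtrace (bigD1 i) //= big1 ?addr0 => [|l nli].
  rewrite mxE (bigD1 j) //= big1 ?addr0 => [|l njl].
    by rewrite mxE !eqxx mul1r.
  by rewrite mxE (negPf njl) andbF mul0r.
by rewrite mxE big1 // => l' _; rewrite mxE (negPf nli) mul0r.
Qed.

Lemma mxtrace_commutator_intertwined (R : comPzRingType) (m p : nat)
    (S : 'M[R]_m) (S' : 'M[R]_p) (F : 'M[R]_(p, m)) (P : 'M[R]_(m, p)) :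
  P *m S' = S *m P -> \tr ((S' *m F - F *m S) *m P) = 0.
Proof.
move=> PS; rewrite mulmxBl raddfB /= -mulmxA mxtrace_mulC -mulmxA PS.
by rewrite !mulmxA subrr.
Qed.

Section ShiftMatrices.
Variable k : fieldType.

Definition shift_trunc (b b' d : nat) : 'M[k]_(b, b') :=
  \matrix_(j, i) (if i == (j + d)%N :> nat then 1 else 0).

Lemma shift_trunc_intertwine (b b' d : nat) :
  (b' <= b + d)%N ->
  shift_trunc b b' d *m shiftmx k b' = shiftmx k b *m shift_trunc b b' d.
Proof.
move=> hb; apply/matrixP => j l; rewrite !mxE.
under eq_bigr do rewrite !mxE.
rewrite (@sum_ord_indicator_mul _ _ _ (fun i => if l == i.+1 :> nat then 1 else 0)).
under eq_bigr do rewrite !mxE.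
rewrite (@sum_ord_indicator_mul _ _ _ (fun i => if l == (i + d)%N :> nat then 1 else 0)).
have := ltn_ord l; case: (ltnP (j + d) b'); case: (ltnP j.+1 b) => // *.
all: rewrite ?addSn //; case: eqP => //; lia.
Qed.

Lemma ext1T_obstruction n (a a' : 'I_n) (b b' d : nat) :
  (d < b')%N -> (b' <= b + d)%N -> ((a' + d).+1 %% n)%N = a ->
  ~ ext1T_zero k (a, b) (a', b').
Proof.
move=> hd hb ha ext; have b_gt0 : (0 < b)%N by lia.
pose G : 'M[k]_(b', b) := delta_mx (Ordinal hd) (Ordinal b_gt0).
have [F [_ defG]] : exists F : 'M[k]_(b', b),
    (forall (i : 'I_b') (j : 'I_b), degI n a' i != degI n a j -> F i j = 0) /\
    G = shiftmx k b' *m F - F *m shiftmx k b.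
  apply: ext => i j; apply: contraNeq; rewrite mxE.
  case: (i =P Ordinal hd) => [->|_]; case: (j =P Ordinal b_gt0) => [->|_] /=;
    rewrite ?eqxx // => _.
  by rewrite /degI addn0 (modn_small (ltn_ord a)) -ha -addn1 modnDml addn1.
have := mxtrace_commutator_intertwined F (shift_trunc_intertwine hb).
by rewrite -defG mxtrace_delta_mul mxE /= eqxx => /eqP; rewrite oner_eq0.
Qed.

End ShiftMatrices.

Lemma ext1T_self_zero_quasilength_lt (k : fieldType) n (a : 'I_n) (b : nat) :
  ext1T_zero k (a, b) (a, b) -> (b < n)%N.
Proof.
move=> ext; have n_gt0 : (0 < n)%N by have := ltn_ord a; lia.
rewrite ltnNge; apply/negP => nb.
apply: (ext1T_obstruction (d := n.-1) _ _ _ ext); try lia.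
by rewrite -addnS prednK // modnDr modn_small.
Qed.

Definition in_arc (n a b c : nat) : Prop :=
  exists C, [/\ (C %% n)%N = c, (a <= C)%N & (C < a + b)%N].

Lemma wings_meet_in_arc n (a c : 'I_n) (b e : nat) (Z : ind n) :
  (b < n)%N -> (e < n)%N -> in_wing (a, b) Z -> in_wing (c, e) Z ->
  in_arc n a b c \/ in_arc n c e a.
Proof.
case: Z => z l hb he [s [l_gt0 hs hz]] [s' [_ hs' hz']].
have {}hs : (s < b)%N by lia.
have {}hs' : (s' < e)%N by lia.
have {z l l_gt0 hz hz'} eq_mod : ((a + s) %% n = (c + s') %% n)%N.
  by rewrite -hz -hz'.
wlog le_ac : a c b e s s' hb he hs hs' eq_mod / (a <= c)%N.
  move=> sym; case: (leqP a c) => [|/ltnW] le.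
    exact: sym hb he hs hs' eq_mod le.
  by case: (sym c a e b s' s he hb hs' hs (esym eq_mod) le); [right | left].
have := ltn_ord c; have := ltn_ord a; case: (ltnP c (a + b)) => hcab ha hc.
  by left; exists c; split => //; rewrite modn_small.
right; exists (a + n)%N; split; [by rewrite modnDr modn_small | lia |].
have : (n %| (c + s') - (a + s))%N by rewrite -eqn_mod_dvd ?eq_mod //; lia.
case/dvdnP => q hq.
have q_gt0 : (0 < q)%N by case: q hq => //=; lia.
by have := leq_pmull n q_gt0; lia.
Qed.

Lemma nested_wings_of_in_arc (k : fieldType) n (a c : 'I_n) (b e : nat) :
  (0 < b)%N -> (0 < e)%N -> ext1T_zero k (c, e) (a, b) -> in_arc n a b c ->
  in_wing (a, b) (c, e) \/ in_wing (c, e) (a, b).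
Proof.
move=> b_gt0 e_gt0 ext [C [hC aC Cab]].
case: (leqP (C + e) (a + b)) => hCe.
  by left; exists (C - a)%N; split => //; [lia | rewrite subnKC].
case: (posnP (C - a)) => hCa.
  have eC : C = a by lia.
  right; exists 0%N; split => //; first lia.
  by rewrite addn0 modn_small // -hC eC modn_small.
exfalso; apply: (ext1T_obstruction (d := (C - a).-1) _ _ _ ext); try lia.
by rewrite -addnS prednK // subnKC.
Qed.

Theorem lemma2p6 (k : closedFieldType) (n : nat) (T : seq (ind n))
    (Ti Tj : ind n) :
  (2 <= n)%N -> maximal_rigid k T -> Ti \in T -> Tj \in T ->
  in_wing Tj Ti \/ in_wing Ti Tj \/ ~ (exists Z : ind n, in_wing Ti Z /\ in_wing Tj Z).
Proof.
move=> _ [valid rigidT _] hi hj.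
case: (classic (exists Z, in_wing Ti Z /\ in_wing Tj Z)); last by right; right.
case=> Z; case: Ti Tj hi hj => [a b] [c e] hi hj [wiZ wjZ].
have b_gt0 : (0 < b)%N := valid _ hi.
have e_gt0 : (0 < e)%N := valid _ hj.
have [ext_ij ext_ji] := rigidT _ _ hi hj.
have b_lt := ext1T_self_zero_quasilength_lt (rigidT _ _ hi hi).1.
have e_lt := ext1T_self_zero_quasilength_lt (rigidT _ _ hj hj).1.
case: (wings_meet_in_arc b_lt e_lt wiZ wjZ) => arc.
  by case: (nested_wings_of_in_arc b_gt0 e_gt0 ext_ji arc); [right; left | left].
by case: (nested_wings_of_in_arc e_gt0 b_gt0 ext_ij arc); [left | right; left].
Qed.
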